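(* Let $\mathcal{A}$ and $\mathcal{U}$ be Banach algebras, $\theta$ a nonzero character on $\mathcal{A}$, and regard $\mathcal{U}$ as a Banach $(\mathcal{A}\times_{\theta}\mathcal{U})$-bimodule via $(a,u)\cdot v=\theta(a)v+uv$, $v\cdot(a,u)=\theta(a)v+vu$. Let $D:\mathcal{A}\times_{\theta}\mathcal{U}\to\mathcal{U}$ be a derivation and $\delta_1(a)=D((a,0))$, $\delta_2(u)=D((0,u))$. Then: (i) $\mathfrak{S}(\delta_1)$ is an $\mathcal{A}$-subbimodule of $\mathcal{U}$ and $\mathfrak{S}(\delta_2)$ is an ideal in $\mathcal{U}$; in particular $\mathcal{A}\cdot\mathfrak{S}(\delta_2)=\mathfrak{S}(\delta_2)\cdot\mathcal{A}=\theta(\mathcal{A})\mathfrak{S}(\delta_2)$; (ii) $\mathcal{U}\mathfrak{S}(\delta_1)=\mathfrak{S}(\delta_1)\mathcal{U}=\{0\}$.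
   Context: The Lau product $\mathcal{A}\times_{\theta}\mathcal{U}$ is $\mathcal{A}\times\mathcal{U}$ with norm $\|(a,u)\|=\|a\|+\|u\|$ and product $(a,u)(a',u')=(aa',\theta(a)u'+\theta(a')u+uu')$. The induced $\mathcal{A}$-bimodule structure on $\mathcal{U}$ is $a\cdot v=v\cdot a=\theta(a)v$. For a linear map $T:\mathcal{E}\to\mathcal{F}$ between Banach spaces, $\mathfrak{S}(T)=\{y\in\mathcal{F}:\exists (x_n)\subseteq\mathcal{E},\ x_n\to0,\ T(x_n)\to y\}$. *)

From mathcomp Require Import all_boot all_order all_algebra.
From mathcomp Require Import all_classical all_reals all_analysis.
Set Implicit Arguments. Unset Strict Implicit. Unset Printing Implicit Defensive.
Import Order.TTheory GRing.Theory Num.Theory.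
Import numFieldNormedType.Exports.
Local Open Scope classical_set_scope.
Local Open Scope ring_scope.

Definition is_banach_mul {K : numFieldType} {V : normedModType K}
  (mul : V -> V -> V) : Prop :=
  (forall x y z, mul x (mul y z) = mul (mul x y) z) /\
  [/\ (forall x y z, mul (x + y) z = mul x z + mul y z),
      (forall x y z, mul x (y + z) = mul x y + mul x z),
      (forall (k : K) x y, mul (k *: x) y = k *: mul x y),
      (forall (k : K) x y, mul x (k *: y) = k *: mul x y)
    & (forall x y, `|mul x y| <= `|x| * `|y|)].

(* A character: a multiplicative linear functional (nonzero-ness is stated
   separately). *)
Definition is_character {K : numFieldType} {V : normedModType K}
  (mul : V -> V -> V) (theta : V -> K) : Prop :=
  [/\ (forall x y, theta (x + y) = theta x + theta y),
      (forall (k : K) x, theta (k *: x) = k * theta x)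
    & (forall x y, theta (mul x y) = theta x * theta y)].

Section Lau.
Context {K : numFieldType} {A U : normedModType K}
  (mulA : A -> A -> A) (mulU : U -> U -> U) (theta : A -> K).

Definition lau_mul (p q : A * U) : A * U :=
  (mulA p.1 q.1, theta p.1 *: q.2 + theta q.1 *: p.2 + mulU p.2 q.2).

Definition lau_lact (p : A * U) (v : U) : U := theta p.1 *: v + mulU p.2 v.
Definition lau_ract (v : U) (p : A * U) : U := theta p.1 *: v + mulU v p.2.

Definition is_lau_derivation (D : A * U -> U) : Prop :=
  [/\ (forall p q : A * U, D (p.1 + q.1, p.2 + q.2) = D p + D q),
      (forall (k : K) (p : A * U), D (k *: p.1, k *: p.2) = k *: D p)
    & (forall p q : A * U,
         D (lau_mul p q) = lau_lact p (D q) + lau_ract (D p) q)].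

Definition theta_lact (a : A) (v : U) : U := theta a *: v.
Definition theta_ract (v : U) (a : A) : U := theta a *: v.
End Lau.

Definition sep_space {K : numFieldType} {E F : normedModType K}
  (T : E -> F) : set F :=
  [set y | exists x : nat -> E, x @ \oo --> (0 : E) /\ (T \o x) @ \oo --> y].

Definition is_subspace {K : numFieldType} {V : normedModType K} (S : set V) : Prop :=
  [/\ S 0, (forall x y, S x -> S y -> S (x + y))
    & (forall (k : K) x, S x -> S (k *: x))].

(* Expanding the derivation identity on the products (0,u)(a,0) = (a,0)(0,u)
   = (0, theta(a) u) shows that u delta1(a) = delta1(a) u = 0: the two
   theta(a) delta2(u) terms cancel.  On (0,u)(0,v) it gives the Leibniz rule
   for delta2.  Multiplication in U is continuous, so the annihilation passes
   from the range of delta1 to its separating space, and the Leibniz rule makes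
   the separating space of delta2 stable under multiplication by U.  The rest
   is set bookkeeping, since a.v = v.a = theta(a) v. *)

From mathcomp Require Import all_boot all_order all_algebra.
From mathcomp Require Import all_classical all_reals all_analysis.
Import Order.TTheory GRing.Theory Num.Theory.
Import numFieldNormedType.Exports.
Local Open Scope classical_set_scope.
Local Open Scope ring_scope.

Lemma image2C {X Y Z : Type} (P : set X) (Q : set Y) (f : X -> Y -> Z) :
  [set f x y | x in P & y in Q] = [set f x y | y in Q & x in P].
Proof.
by apply/seteqP; split=> _ [x Px [y Qy <-]]; exists y => //; exists x.
Qed.

Lemma image2_imagel {W X Y Z : Type} (P : set W) (Q : set Y) (g : W -> X)
    (f : X -> Y -> Z) :
  [set f x y | x in g @` P & y in Q] = [set f (g w) y | w in P & y in Q].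
Proof.
apply/seteqP; split.
  by move=> _ [_ [w Pw <-] [y Qy <-]]; exists w => //; exists y.
by move=> _ [w Pw [y Qy <-]]; exists (g w); [exists w|exists y].
Qed.

Lemma image2_cst {X Y Z : Type} (P : set X) (Q : set Y) (f : X -> Y -> Z) (z : Z) :
  P !=set0 -> Q !=set0 -> (forall x y, P x -> Q y -> f x y = z) ->
  [set f x y | x in P & y in Q] = [set z].
Proof.
move=> [x Px] [y Qy] fz; apply/seteqP; split.
  by move=> _ [x' Px' [y' Qy' <-]]; exact: fz.
by move=> _ ->; exists x => //; exists y => //; exact: fz.
Qed.

Section ContinuityCriterion.
Context {K : numFieldType} {V W : normedModType K}.

Lemma bounded_additive_continuous (f : V -> W) (c : K) : 0 <= c ->
  (forall x y, f (x - y) = f x - f y) -> (forall x, `|f x| <= c * `|x|) ->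
  continuous f.
Proof.
move=> c0 fB fb v; have c1 : 0 < c + 1 by rewrite ltr_wpDl.
apply/cvgrPdist_lt => e e0; near=> z; rewrite -fB (le_lt_trans (fb _)) //.
apply: (@le_lt_trans _ _ ((c + 1) * `|v - z|)); first by rewrite ler_wpM2r // lerDl.
rewrite mulrC -ltr_pdivlMr //; near: z; apply: cvgr_dist_lt => //.
by rewrite divr_gt0.
Unshelve. all: by end_near.
Qed.

End ContinuityCriterion.

Section BanachMul.
Context {K : numFieldType} {V : normedModType K} {m : V -> V -> V}.
Hypothesis Hm : is_banach_mul m.

Lemma bmulrBr u x y : m u (x - y) = m u x - m u y.
Proof.
have [_ [_ mDr _ mZr _]] := Hm.
by rewrite mDr -scaleN1r mZr scaleN1r.
Qed.

Lemma bmulrBl u x y : m (x - y) u = m x u - m y u.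
Proof.
have [_ [mDl _ mZl _ _]] := Hm.
by rewrite mDl -scaleN1r mZl scaleN1r.
Qed.

Lemma bmulr0 u : m u 0 = 0.
Proof. by have := bmulrBr u 0 0; rewrite !subrr. Qed.

Lemma bmul0r u : m 0 u = 0.
Proof. by have := bmulrBl u 0 0; rewrite !subrr. Qed.

Lemma bmulr_continuous u : continuous (m u).
Proof.
have [_ [_ _ _ _ mN]] := Hm.
apply: (@bounded_additive_continuous _ _ _ _ `|u| (normr_ge0 u)).
  exact: bmulrBr.
exact: mN.
Qed.

Lemma bmull_continuous u : continuous (m^~ u).
Proof.
have [_ [_ _ _ _ mN]] := Hm.
apply: (@bounded_additive_continuous _ _ _ _ `|u| (normr_ge0 u)).
  exact: bmulrBl.
by move=> x; rewrite mulrC; exact: mN.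
Qed.

End BanachMul.

Section SeparatingSpace.
Context {K : numFieldType} {E F : normedModType K} {T : E -> F}.

Lemma sep_space_subspace :
  (forall x y, T (x + y) = T x + T y) -> (forall k x, T (k *: x) = k *: T x) ->
  is_subspace (sep_space T).
Proof.
move=> TD TZ; have T0 : T 0 = 0 by rewrite -(scale0r 0) TZ scale0r.
split.
- by exists (fun=> 0); split; rewrite /comp ?T0; exact: cvg_cst.
- move=> y1 y2 [x1 [x1_0 Tx1]] [x2 [x2_0 Tx2]].
  exists (fun n => x1 n + x2 n); split; first by rewrite -[0]addr0; exact: cvgD.
  by rewrite /comp; under eq_fun do rewrite TD; exact: cvgD.
- move=> k y [x [x0 Tx]]; exists (fun n => k *: x n); split.
    by rewrite -(scaler0 _ k); exact: cvgZl_tmp.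
  by rewrite /comp; under eq_fun do rewrite TZ; exact: cvgZl_tmp.
Qed.

Lemma sep_space_stable (f : E -> E) (g : F -> F) (h : E -> F) :
  continuous f -> continuous g -> continuous h -> f 0 = 0 -> h 0 = 0 ->
  (forall x, T (f x) = g (T x) + h x) ->
  forall y, sep_space T y -> sep_space T (g y).
Proof.
move=> cf cg ch f0 h0 Tf y [x [x0 Tx]]; exists (f \o x); split.
  by rewrite -f0; exact: continuous_cvg _ (cf 0) x0.
have -> : T \o (f \o x) = fun n => g (T (x n)) + h (x n) by apply/funext => n /=.
rewrite -[g y]addr0 -h0.
apply: cvgD; first exact: continuous_cvg _ (cg y) Tx.
exact: continuous_cvg _ (ch 0) x0.
Qed.

Lemma sep_space_annihilated {G : normedModType K} (g : F -> G) :
  continuous g -> (forall x, g (T x) = 0) -> forall y, sep_space T y -> g y = 0.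
Proof.
move=> cg gT0 y [x [_ Tx]].
have : (g \o (T \o x)) @ \oo --> g y by exact: continuous_cvg _ (cg y) Tx.
have -> : g \o (T \o x) = fun=> 0 by apply/funext => n /=; rewrite gT0.
by move=> gy; apply: (cvg_unique (@norm_hausdorff K G) gy); exact: cvg_cst.
Qed.

End SeparatingSpace.

Section LauDerivation.
Context {K : numFieldType} {A U : normedModType K}
  {mulA : A -> A -> A} {mulU : U -> U -> U} {theta : A -> K} {D : A * U -> U}.
Hypotheses (HA : is_banach_mul mulA) (HU : is_banach_mul mulU)
  (Htheta : is_character mulA theta)
  (HD : is_lau_derivation mulA mulU theta D).

Let theta0 : theta 0 = 0.
Proof. by have [_ thetaZ _] := Htheta; rewrite -(scale0r 0) thetaZ mul0r. Qed.

Lemma lau_derivation_fstD a b : D (a + b, 0) = D (a, 0) + D (b, 0).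
Proof. by have [DD _ _] := HD; rewrite -DD /= addr0. Qed.

Lemma lau_derivation_fstZ k a : D (k *: a, 0) = k *: D (a, 0).
Proof. by have [_ DZ _] := HD; rewrite -DZ /= scaler0. Qed.

Lemma lau_derivation_sndD u v : D (0, u + v) = D (0, u) + D (0, v).
Proof. by have [DD _ _] := HD; rewrite -DD /= addr0. Qed.

Lemma lau_derivation_sndZ k u : D (0, k *: u) = k *: D (0, u).
Proof. by have [_ DZ _] := HD; rewrite -DZ /= scaler0. Qed.

Lemma lau_derivation_sndM u v :
  D (0, mulU u v) = mulU u (D (0, v)) + mulU (D (0, u)) v.
Proof.
have [_ _ DM] := HD; have := DM (0, u) (0, v).
by rewrite /lau_mul /lau_lact /lau_ract /= theta0 (bmul0r HA) !scale0r !add0r.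
Qed.

Lemma mul_lau_derivation_fst u a : mulU u (D (a, 0)) = 0.
Proof.
have [_ _ DM] := HD; have := DM (0, u) (a, 0).
rewrite /lau_mul /lau_lact /lau_ract /= theta0 (bmul0r HA) !(bmulr0 HU) !scale0r.
rewrite !add0r !addr0 lau_derivation_sndZ -[X in X = _]add0r.
by move=> /addIr <-.
Qed.

Lemma lau_derivation_fst_mul u a : mulU (D (a, 0)) u = 0.
Proof.
have [_ _ DM] := HD; have := DM (a, 0) (0, u).
rewrite /lau_mul /lau_lact /lau_ract /= theta0 (bmulr0 HA) !(bmul0r HU) !scale0r.
rewrite !add0r !addr0 lau_derivation_sndZ -[X in X = _]add0r [in RHS]addrC.
by move=> /addIr <-.
Qed.

Lemma sep_space_snd_mull u v : sep_space (fun w => D (0, w)) v ->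
  sep_space (fun w => D (0, w)) (mulU u v).
Proof.
apply: sep_space_stable (bmulr_continuous HU u) (bmulr_continuous HU u)
  (bmulr_continuous HU (D (0, u))) (bmulr0 HU u) (bmulr0 HU _) _ v.
exact: lau_derivation_sndM.
Qed.

Lemma sep_space_snd_mulr u v : sep_space (fun w => D (0, w)) v ->
  sep_space (fun w => D (0, w)) (mulU v u).
Proof.
apply: sep_space_stable (bmull_continuous HU u) (bmull_continuous HU u)
  (bmull_continuous HU (D (0, u))) (bmul0r HU u) (bmul0r HU _) _ v.
by move=> x; rewrite lau_derivation_sndM addrC.
Qed.

Lemma mul_sep_space_fst_eq0 u v : sep_space (fun a => D (a, 0)) v -> mulU u v = 0.
Proof.
exact: sep_space_annihilated (bmulr_continuous HU u) (mul_lau_derivation_fst u) v.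
Qed.

Lemma sep_space_fst_mul_eq0 u v : sep_space (fun a => D (a, 0)) v -> mulU v u = 0.
Proof.
exact: sep_space_annihilated (bmull_continuous HU u) (lau_derivation_fst_mul u) v.
Qed.

End LauDerivation.

Theorem theorem2p20 (K : numFieldType) (A U : completeNormedModType K)
  (mulA : A -> A -> A) (mulU : U -> U -> U) (theta : A -> K)
  (D : A * U -> U) :
  is_banach_mul mulA -> is_banach_mul mulU ->
  is_character mulA theta -> (exists a, theta a != 0) ->
  is_lau_derivation mulA mulU theta D ->
  let delta1 := fun a : A => D (a, 0) in
  let delta2 := fun u : U => D (0, u) in
  let S1 := sep_space delta1 in
  let S2 := sep_space delta2 in
  (* (i) S1 is an A-subbimodule of U *)
  (is_subspace S1 /\
   (forall a v, S1 v -> S1 (theta_lact theta a v)) /\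
   (forall a v, S1 v -> S1 (theta_ract theta v a))) /\
  (* (i) S2 is an ideal of U *)
  (is_subspace S2 /\
   (forall u v, S2 v -> S2 (mulU u v)) /\
   (forall u v, S2 v -> S2 (mulU v u))) /\
  (* (i) A . S2 = S2 . A = theta(A) S2 *)
  ([set theta_lact theta a v | a in [set: A] & v in S2] =
     [set theta_ract theta v a | v in S2 & a in [set: A]] /\
   [set theta_ract theta v a | v in S2 & a in [set: A]] =
     [set k *: v | k in theta @` [set: A] & v in S2]) /\
  (* (ii) U S1 = S1 U = {0} *)
  ([set mulU u v | u in [set: U] & v in S1] = [set 0] /\
   [set mulU v u | v in S1 & u in [set: U]] = [set 0]).
Proof.
move=> HA HU Htheta _ HD delta1 delta2 S1 S2.
have S1sub : is_subspace S1.
  exact: sep_space_subspace (lau_derivation_fstD HD) (lau_derivation_fstZ HD).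
have S2sub : is_subspace S2.
  exact: sep_space_subspace (lau_derivation_sndD HD) (lau_derivation_sndZ HD).
have [S1_0 _ S1Z] := S1sub.
split; first by split=> //; split=> a v; exact: S1Z.
split.
  split=> //; split=> u v; first exact: sep_space_snd_mull HA HU Htheta HD u v.
  exact: sep_space_snd_mulr HA HU Htheta HD u v.
split; first by split; [exact: image2C|rewrite image2_imagel; exact: image2C].
split; apply: image2_cst; try by exists 0.
- by move=> u v _ /(mul_sep_space_fst_eq0 HA HU Htheta HD).
- by move=> v u /(sep_space_fst_mul_eq0 HA HU Htheta HD).
Qed.
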